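(* Fix $N\ge1$. Partition the days $\{0,1,\dots,N-1\}$ into break days (on which the dose is forced to be $0$), fixed days (on which the dose is forced to equal a prescribed value $\bar d_k\ge0$), and free days, with at least one free day, and with the prescribed fixed doses satisfying $\sum_{k\text{ fixed}}\mathrm{BED}_O(\bar d_k)\le c$. Consider minimizing $Y_{N-1}^+$ over the free doses $d_k\ge0$ subject to $\sum_{k=0}^{N-1}\mathrm{BED}_O(d_k)\le c$ (with the forced values on break and fixed days). Assume $\phi(x)>0$ for all $x>0$ and $\phi$ is non-increasing in $x$. If $[\alpha/\beta]_O\ge\gamma[\alpha/\beta]_T$, then an optimal solution is to deliver a single nonzero dose on the last free day (all other free days receiving dose $0$). If $[\alpha/\beta]_O<\gamma[\alpha/\beta]_T$, then an optimal sequence of doses, restricted to the free days, is non-decreasing over the course of treatment.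
   Context: Model: Tumor parameters $\alpha_T>0$, $\beta_T>0$, $[\alpha/\beta]_T=\alpha_T/\beta_T$; organ-at-risk (OAR) parameter $[\alpha/\beta]_O>0$; sparing factor $0<\gamma<1$; OAR limit $c>0$. Define $\mathrm{BED}_T(d)=d\left(1+\frac{d}{[\alpha/\beta]_T}\right)$ and $\mathrm{BED}_O(d)=\gamma d\left(1+\frac{\gamma d}{[\alpha/\beta]_O}\right)$. Tumor growth between doses follows $\frac{1}{x}\frac{dx}{dt}=\phi(x)$, with $\phi:(0,\infty)\to\mathbb{R}$ continuous and non-increasing. Doses $d_0,\dots,d_{N-1}$ are delivered at times $0,1,\dots,N-1$. With $Y=\ln(\text{number of tumor cells})/\alpha_T$, let $F$ be the one-day growth map for $Y$ under the ODE. With initial cell number $X_0>0$ and $Y_0^-=\ln(X_0)/\alpha_T$: $Y_0^+=Y_0^--\mathrm{BED}_T(d_0)$, $Y_{i+1}^+=F(Y_i^+)-\mathrm{BED}_T(d_{i+1})$ for $i=0,\dots,N-2$. *)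

From Stdlib Require Import Reals.
From Coquelicot Require Import Coquelicot.
Open Scope R_scope.

Definition BED_T (abT d : R) : R := d * (1 + d / abT).

Definition BED_O (abO gam d : R) : R := gam * d * (1 + gam * d / abO).

Inductive day_kind : Type := BreakDay | FixedDay | FreeDay.

Fixpoint sumN (f : nat -> R) (N : nat) : R :=
  match N with
  | O => 0
  | S n => sumN f n + f n
  end.

(* F is the one-day growth map for Y = ln(#cells)/alpha_T under
   (1/x) dx/dt = phi(x): F y = ln(x(1))/alpha_T where x solves
   x' = x phi(x) on [0,1] with x(0) = exp(alpha_T y). *)
Definition one_day_growth_map (alphaT : R) (phi : R -> R) (F : R -> R) : Prop :=
  forall y : R, exists x : R -> R,
    x 0 = exp (alphaT * y) /\
    (forall t, 0 <= t <= 1 -> 0 < x t /\ is_derive x t (x t * phi (x t))) /\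
    F y = ln (x 1) / alphaT.

Fixpoint Yplus (F : R -> R) (abT Y0m : R) (d : nat -> R) (n : nat) : R :=
  match n with
  | O => Y0m - BED_T abT (d O)
  | S i => F (Yplus F abT Y0m d i) - BED_T abT (d (S i))
  end.

Definition feasible (N : nat) (kind : nat -> day_kind) (dbar : nat -> R)
    (abO gam c : R) (d : nat -> R) : Prop :=
  (forall k, (k < N)%nat -> 0 <= d k) /\
  (forall k, (k < N)%nat -> kind k = BreakDay -> d k = 0) /\
  (forall k, (k < N)%nat -> kind k = FixedDay -> d k = dbar k) /\
  sumN (fun k => BED_O abO gam (d k)) N <= c.

Definition optimal (N : nat) (kind : nat -> day_kind) (dbar : nat -> R)
    (abO gam c : R) (F : R -> R) (abT Y0m : R) (d : nat -> R) : Prop :=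
  feasible N kind dbar abO gam c d /\
  forall d', feasible N kind dbar abO gam c d' ->
    Yplus F abT Y0m d (N - 1) <= Yplus F abT Y0m d' (N - 1).

Definition fixed_BED_sum (N : nat) (kind : nat -> day_kind) (dbar : nat -> R)
    (abO gam : R) : R :=
  sumN (fun k => match kind k with FixedDay => BED_O abO gam (dbar k) | _ => 0 end) N.

From Stdlib Require Import Reals Lra Psatz Lia.
From Coquelicot Require Import Coquelicot.
From HB Require structures.
From mathcomp Require all_boot all_order all_algebra all_classical all_reals all_analysis.
From mathcomp Require Rstruct Rstruct_topology.
Open Scope R_scope.

(* The growth map F is non-decreasing and 1-Lipschitz: the log-gap between two
   solutions of x' = x phi(x) shrinks because phi is non-increasing.  Consequently
   postponing tumour BED never hurts: a schedule that lags behind another in cumulative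
   tumour BED at every day, but has caught up by the end, ends at least as low.

   If [abO >= gam abT], the tumour BED sum d + (sum d^2)/abT of the free doses is, for a
   given OAR budget, largest when the budget is spent on a single dose, because
   sum d^2 <= (sum d)^2; postponing that dose to the last free day is then optimal.

   Otherwise an optimum exists by compactness (Tychonoff), and an optimum maximising the
   day-weighted dose sum k d_k has no inversion d_i > d_j with i < j on free days:
   swapping the two doses keeps it feasible and optimal but increases the weighted dose. *)

Lemma sumN_ext f g n : (forall k, (k < n)%nat -> f k = g k) -> sumN f n = sumN g n.
Proof.
  induction n as [|n IH]; intros Hfg; simpl; [reflexivity|].
  rewrite IH, (Hfg n) by (lia || (intros; apply Hfg; lia)); reflexivity.
Qed.

Lemma sumN_zero f n : (forall k, (k < n)%nat -> f k = 0) -> sumN f n = 0.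
Proof.
  induction n as [|n IH]; intros Hf; simpl; [reflexivity|].
  rewrite IH, (Hf n) by (lia || (intros; apply Hf; lia)). ring.
Qed.

Lemma sumN_plus f g n : sumN (fun k => f k + g k) n = sumN f n + sumN g n.
Proof. induction n as [|n IH]; simpl; [ring | rewrite IH; ring]. Qed.

Lemma sumN_minus f g n : sumN (fun k => f k - g k) n = sumN f n - sumN g n.
Proof. induction n as [|n IH]; simpl; [ring | rewrite IH; ring]. Qed.

Lemma sumN_scal a f n : sumN (fun k => a * f k) n = a * sumN f n.
Proof. induction n as [|n IH]; simpl; [ring | rewrite IH; ring]. Qed.

Lemma sumN_nonneg f n : (forall k, (k < n)%nat -> 0 <= f k) -> 0 <= sumN f n.
Proof.
  induction n as [|n IH]; intros Hf; simpl; [lra|].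
  specialize (IH ltac:(intros; apply Hf; lia)). specialize (Hf n ltac:(lia)). lra.
Qed.

Lemma sumN_le_n f m n :
  (forall k, (k < n)%nat -> 0 <= f k) -> (m <= n)%nat -> sumN f m <= sumN f n.
Proof.
  intros Hf Hmn. induction Hmn as [|n Hmn IH]; simpl; [lra|].
  specialize (IH ltac:(intros; apply Hf; lia)). specialize (Hf n ltac:(lia)). lra.
Qed.

Lemma sumN_le_term f n k : (forall k, (k < n)%nat -> 0 <= f k) -> (k < n)%nat -> f k <= sumN f n.
Proof.
  intros Hf Hk. apply Rle_trans with (sumN f (S k)); [|apply sumN_le_n; auto].
  simpl. pose proof (sumN_nonneg f k ltac:(intros; apply Hf; lia)). lra.
Qed.

Lemma sumN_sq_le f n :
  (forall k, (k < n)%nat -> 0 <= f k) -> sumN (fun k => f k * f k) n <= sumN f n * sumN f n.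
Proof.
  induction n as [|n IH]; intros Hf; simpl; [lra|].
  specialize (IH ltac:(intros; apply Hf; lia)).
  pose proof (sumN_nonneg f n ltac:(intros; apply Hf; lia)). specialize (Hf n ltac:(lia)). nra.
Qed.

Lemma sumN_indicator j v n :
  sumN (fun k => if Nat.eqb k j then v else 0) n = if Nat.ltb j n then v else 0.
Proof.
  induction n as [|n IH]; simpl; [reflexivity|]. rewrite IH.
  destruct (Nat.eqb_spec n j), (Nat.ltb_spec j n), (Nat.ltb_spec j (S n)); lra || lia.
Qed.

Definition mono_nonexpansive (F : R -> R) : Prop :=
  forall y1 y2, y1 <= y2 -> F y1 <= F y2 /\ F y2 - F y1 <= y2 - y1.

Lemma is_derive_ln_solution (x p : R -> R) t :
  0 < x t -> is_derive x t (x t * p (x t)) -> is_derive (fun s => ln (x s)) t (p (x t)).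
Proof.
  intros Hx Hd.
  replace (p (x t)) with (scal (x t * p (x t)) (/ x t))
    by (unfold scal; simpl; unfold mult; simpl; field; lra).
  exact (is_derive_comp ln x t _ _ (is_derive_ln _ Hx) Hd).
Qed.

Lemma continuity_pt_of_is_derive (f : R -> R) t l : is_derive f t l -> continuity_pt f t.
Proof.
  intros H. apply continuity_pt_filterlim.
  apply (@ex_derive_continuous R_AbsRing R_NormedModule). exists l; exact H.
Qed.

Section ShrinkingGap.
Variables D dD : R -> R.
Hypothesis D_derive : forall t, 0 <= t <= 1 -> is_derive D t (dD t).
Hypothesis D_toward_zero : forall t, 0 <= t <= 1 -> D t * dD t <= 0.

Lemma sq_nonincreasing a b : 0 <= a <= b -> b <= 1 -> D b * D b <= D a * D a.
Proof.
  intros Hab Hb.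
  assert (Hsq : forall s, 0 <= s <= 1 ->
            is_derive (fun u => D u * D u) s (2 * D s * dD s)).
  { intros s Hs. pose proof (D_derive s Hs) as Hd.
    replace (2 * D s * dD s) with (plus (mult (dD s) (D s)) (mult (D s) (dD s)))
      by (unfold plus, mult; simpl; ring).
    exact (is_derive_mult D D s _ _ Hd Hd (fun _ _ => Rmult_comm _ _)). }
  destruct (MVT_gen (fun u => D u * D u) a b (fun u => 2 * D u * dD u)) as [s [Hs Hmvt]];
    rewrite Rmin_left, Rmax_right in * by lra.
  - intros s Hs. apply Hsq. lra.
  - intros s Hs. eapply continuity_pt_of_is_derive, Hsq. lra.
  - assert (D s * dD s <= 0) by (apply D_toward_zero; lra). nra.
Qed.

(* A nonnegative gap cannot change sign: at a zero, D^2 would already vanish for good. *)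
Lemma nonneg_gap_shrinks : 0 <= D 0 -> 0 <= D 1 <= D 0.
Proof.
  intros HD0.
  assert (Hsq01 := sq_nonincreasing 0 1 ltac:(lra) ltac:(lra)).
  enough (0 <= D 1) by nra.
  destruct (Rle_or_lt 0 (D 1)) as [|HD1]; [assumption|exfalso].
  destruct (Ranalysis5.IVT_interv (fun t => - D t) 0 1) as [t [Ht Hzero]];
    [| lra | nra | lra |].
  - intros s Hs. apply (continuity_pt_of_is_derive _ _ (opp (dD s))).
    exact (is_derive_opp D s _ (D_derive s ltac:(lra))).
  - pose proof (sq_nonincreasing t 1 ltac:(lra) ltac:(lra)). nra.
Qed.

End ShrinkingGap.

Lemma growth_map_mono_nonexpansive alphaT phi F :
  0 < alphaT -> (forall x y, 0 < x -> x <= y -> phi y <= phi x) ->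
  one_day_growth_map alphaT phi F -> mono_nonexpansive F.
Proof.
  intros Ha Hphi HF y1 y2 Hy.
  destruct (HF y1) as [x1 [Hx10 [Hx1 HF1]]], (HF y2) as [x2 [Hx20 [Hx2 HF2]]].
  set (D := fun t => ln (x2 t) - ln (x1 t)).
  assert (HD0 : D 0 = alphaT * (y2 - y1)) by (unfold D; rewrite Hx10, Hx20, !ln_exp; ring).
  assert (HD1 : F y2 - F y1 = D 1 / alphaT) by (rewrite HF1, HF2; unfold D; field; lra).
  assert (Hgap : 0 <= D 1 <= D 0).
  { apply (nonneg_gap_shrinks D (fun t => phi (x2 t) - phi (x1 t))); [| | rewrite HD0; nra].
    - intros t Ht. destruct (Hx1 t Ht), (Hx2 t Ht).
      apply (is_derive_minus (fun s => ln (x2 s)) (fun s => ln (x1 s)));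
        apply is_derive_ln_solution; assumption.
    - intros t Ht. destruct (Hx1 t Ht), (Hx2 t Ht). unfold D.
      destruct (Rle_dec (x1 t) (x2 t)).
      + assert (ln (x1 t) <= ln (x2 t)) by (apply ln_le; lra).
        assert (phi (x2 t) <= phi (x1 t)) by (apply Hphi; lra). nra.
      + assert (ln (x2 t) <= ln (x1 t)) by (apply ln_le; lra).
        assert (phi (x1 t) <= phi (x2 t)) by (apply Hphi; lra). nra. }
  rewrite HD0 in Hgap. split.
  - assert (0 <= F y2 - F y1) by (rewrite HD1; apply Rdiv_le_0_compat; lra). lra.
  - rewrite HD1. apply Rmult_le_reg_l with alphaT; [lra|]. field_simplify; lra.
Qed.

Lemma BED_T_0 abT : BED_T abT 0 = 0.
Proof. unfold BED_T; ring. Qed.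

Lemma BED_O_0 abO gam : BED_O abO gam 0 = 0.
Proof. unfold BED_O; ring. Qed.

Lemma BED_T_le abT x y : 0 < abT -> 0 <= x <= y -> BED_T abT x <= BED_T abT y.
Proof.
  intros Ht Hxy. unfold BED_T.
  assert (x / abT <= y / abT) by (apply Rmult_le_compat_r; [apply Rlt_le, Rinv_0_lt_compat|]; lra).
  assert (0 <= x / abT) by (apply Rdiv_le_0_compat; lra). nra.
Qed.

Lemma BED_O_ge_linear abO gam x : 0 < abO -> 0 < gam -> 0 <= x -> gam * x <= BED_O abO gam x.
Proof.
  intros Ha Hg Hx. unfold BED_O.
  assert (0 <= gam * x / abO) by (apply Rdiv_le_0_compat; nra).
  assert (0 <= gam * x) by nra. nra.
Qed.

Lemma BED_O_nonneg abO gam x : 0 < abO -> 0 < gam -> 0 <= x -> 0 <= BED_O abO gam x.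
Proof. intros. pose proof (BED_O_ge_linear abO gam x). nra. Qed.

(* the positive root of the quadratic BED_O abO gam z = u *)
Definition BED_O_inv abO gam u := (- abO + sqrt (abO * abO + 4 * abO * u)) / (2 * gam).

Lemma BED_O_inv_spec abO gam u : 0 < abO -> 0 < gam -> 0 <= u ->
  0 <= BED_O_inv abO gam u /\ BED_O abO gam (BED_O_inv abO gam u) = u /\
  (0 < u -> 0 < BED_O_inv abO gam u).
Proof.
  intros Ha Hg Hu. unfold BED_O_inv.
  set (S := sqrt (abO * abO + 4 * abO * u)).
  assert (HS2 : S * S = abO * abO + 4 * abO * u) by (apply sqrt_sqrt; nra).
  assert (HS0 : 0 <= S) by apply sqrt_pos.
  assert (HS : abO <= S) by nra.
  split; [|split].
  - apply Rdiv_le_0_compat; lra.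
  - unfold BED_O. field_simplify; try lra. replace (S ^ 2) with (S * S) by ring.
    rewrite HS2. field. lra.
  - intros Hu'. assert (abO < S) by nra. apply Rdiv_lt_0_compat; lra.
Qed.

Lemma Yplus_ext F abT Y0 (d d' : nat -> R) n : (forall k, (k <= n)%nat -> d k = d' k) ->
  Yplus F abT Y0 d n = Yplus F abT Y0 d' n.
Proof.
  induction n as [|n IH]; intros Hd; simpl.
  - rewrite Hd by lia. reflexivity.
  - rewrite IH, (Hd (S n)) by (lia || (intros; apply Hd; lia)). reflexivity.
Qed.

Definition swap (d : nat -> R) (i j k : nat) : R :=
  if Nat.eqb k i then d j else if Nat.eqb k j then d i else d k.

Lemma sumN_swap_sub (g : nat -> R -> R) d i j n : i <> j -> (i < n)%nat -> (j < n)%nat ->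
  sumN (fun k => g k (swap d i j k) - g k (d k)) n =
  (g i (d j) - g i (d i)) + (g j (d i) - g j (d j)).
Proof.
  intros Hij Hi Hj.
  rewrite (sumN_ext _ (fun k => (if Nat.eqb k i then g i (d j) - g i (d i) else 0)
                               + (if Nat.eqb k j then g j (d i) - g j (d j) else 0))).
  - rewrite sumN_plus, !sumN_indicator.
    destruct (Nat.ltb_spec i n), (Nat.ltb_spec j n); lia || reflexivity.
  - intros k _. unfold swap.
    destruct (Nat.eqb_spec k i), (Nat.eqb_spec k j); subst; lia || ring.
Qed.

Section Comparison.
Variables (F : R -> R) (abT Y0 : R).
Hypothesis HF : mono_nonexpansive F.

Lemma Yplus_le_add_BED_T_gap (a b : nat -> R) n :
  (forall m, (m < n)%nat ->
     0 <= sumN (fun k => BED_T abT (b k) - BED_T abT (a k)) (S m)) ->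
  Yplus F abT Y0 a n <=
  Yplus F abT Y0 b n + sumN (fun k => BED_T abT (b k) - BED_T abT (a k)) (S n).
Proof.
  set (gap := fun k => BED_T abT (b k) - BED_T abT (a k)).
  induction n as [|n IH]; intros Hgap.
  - simpl; unfold gap; lra.
  - specialize (IH ltac:(intros; apply Hgap; lia)).
    specialize (Hgap n ltac:(lia)).
    change (sumN gap (S (S n))) with (sumN gap (S n) + gap (S n)).
    cbn [Yplus]; unfold gap at 2.
    destruct (HF _ _ IH) as [Hmono _].
    destruct (HF (Yplus F abT Y0 b n) (Yplus F abT Y0 b n + sumN gap (S n))) as [_ Hlip];
      lra.
Qed.

Lemma Yplus_le_tail (a b : nat -> R) m n : (m <= n)%nat ->
  Yplus F abT Y0 a m <= Yplus F abT Y0 b m ->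
  (forall k, (m < k <= n)%nat -> a k = b k) ->
  Yplus F abT Y0 a n <= Yplus F abT Y0 b n.
Proof.
  intros Hmn Hm Hab. induction Hmn as [|n Hmn IH]; [assumption|].
  cbn [Yplus]. rewrite (Hab (S n)) by lia.
  destruct (HF _ _ (IH ltac:(intros; apply Hab; lia))). lra.
Qed.

Lemma Yplus_swap_le d i j n : (i < j)%nat -> (j <= n)%nat ->
  BED_T abT (d j) <= BED_T abT (d i) ->
  Yplus F abT Y0 (swap d i j) n <= Yplus F abT Y0 d n.
Proof.
  intros Hij Hjn Hdji.
  assert (Hpartial : forall m, sumN (fun k => BED_T abT (d k) - BED_T abT (swap d i j k)) (S m) =
      (if Nat.ltb i (S m) then BED_T abT (d i) - BED_T abT (d j) else 0)
      - (if Nat.ltb j (S m) then BED_T abT (d i) - BED_T abT (d j) else 0)).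
  { intros m.
    rewrite (sumN_ext _ (fun k => (if Nat.eqb k i then BED_T abT (d i) - BED_T abT (d j) else 0)
                               - (if Nat.eqb k j then BED_T abT (d i) - BED_T abT (d j) else 0))).
    - rewrite sumN_minus, !sumN_indicator. reflexivity.
    - intros k _. unfold swap.
      destruct (Nat.eqb_spec k i), (Nat.eqb_spec k j); subst; lia || ring. }
  pose proof (Yplus_le_add_BED_T_gap (swap d i j) d n) as Hcmp.
  rewrite Hpartial in Hcmp.
  replace (Nat.ltb i (S n)) with true in Hcmp by (symmetry; apply Nat.ltb_lt; lia).
  replace (Nat.ltb j (S n)) with true in Hcmp by (symmetry; apply Nat.ltb_lt; lia).
  enough (Hpos : forall m, (m < n)%nat -> 0 <= sumN (fun k => BED_T abT (d k) - BED_T abT (swap d i j k)) (S m))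
    by (specialize (Hcmp Hpos); lra).
  intros m _. rewrite Hpartial.
  destruct (Nat.ltb_spec i (S m)), (Nat.ltb_spec j (S m)); lia || lra.
Qed.

End Comparison.

Lemma BED_T_le_of_BED_O_le abO gam abT X Q z :
  0 < abO -> 0 < gam -> 0 < abT -> gam * abT <= abO ->
  0 <= X -> 0 <= Q -> Q <= X * X -> 0 <= z ->
  gam * X + gam * gam * Q / abO <= BED_O abO gam z -> X + Q / abT <= BED_T abT z.
Proof.
  intros Ha Hg Ht Hat HX HQ HQX Hz H. unfold BED_O, BED_T, Rdiv in *.
  assert (Hq : 0 < / abO) by (apply Rinv_0_lt_compat; lra).
  assert (Hp : 0 < / abT) by (apply Rinv_0_lt_compat; lra).
  assert (Hgqp : gam * / abO <= / abT).
  { apply Rmult_le_reg_r with (abO * abT); [nra|].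
    replace (gam * / abO * (abO * abT)) with (gam * abT) by (field; lra).
    replace (/ abT * (abO * abT)) with abO by (field; lra). lra. }
  assert (H' : gam * X + gam * gam * Q * / abO <= gam * z + gam * gam * z * z * / abO) by nra.
  assert (HQz : Q <= z * z).
  { destruct (Rle_or_lt Q (z * z)) as [|Hzq]; [assumption|exfalso].
    assert (z < X) by nra.
    assert (gam * gam * z * z * / abO <= gam * gam * Q * / abO)
      by (apply Rmult_le_compat_r; nra).
    nra. }
  (* X + Q/abT = (gam X + gam^2 Q/abO)/gam + Q (1/abT - gam/abO), both terms increase with z *)
  assert (gam * Q * (/ abT - gam * / abO) <= gam * z * z * (/ abT - gam * / abO))
    by (apply Rmult_le_compat_r; nra).
  nra.
Qed.

Lemma sumN_BED_T_le_of_BED_O_le abO gam abT (x : nat -> R) n z :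
  0 < abO -> 0 < gam -> 0 < abT -> gam * abT <= abO ->
  (forall k, (k < n)%nat -> 0 <= x k) -> 0 <= z ->
  sumN (fun k => BED_O abO gam (x k)) n <= BED_O abO gam z ->
  sumN (fun k => BED_T abT (x k)) n <= BED_T abT z.
Proof.
  intros Ha Hg Ht Hat Hx Hz Hsum.
  set (X := sumN x n). set (Q := sumN (fun k => x k * x k) n).
  assert (HT : sumN (fun k => BED_T abT (x k)) n = X + Q / abT).
  { rewrite (sumN_ext _ (fun k => x k + / abT * (x k * x k)))
      by (intros; unfold BED_T, Rdiv; ring).
    rewrite sumN_plus, sumN_scal. unfold X, Q, Rdiv. ring. }
  assert (HO : sumN (fun k => BED_O abO gam (x k)) n = gam * X + gam * gam * Q / abO).
  { rewrite (sumN_ext _ (fun k => gam * x k + gam * gam / abO * (x k * x k)))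
      by (intros; unfold BED_O, Rdiv; ring).
    rewrite sumN_plus, !sumN_scal. unfold X, Q, Rdiv. ring. }
  rewrite HT. rewrite HO in Hsum.
  apply (BED_T_le_of_BED_O_le abO gam); try assumption.
  - apply sumN_nonneg; assumption.
  - apply sumN_nonneg. intros k Hk. specialize (Hx k Hk). nra.
  - apply sumN_sq_le; assumption.
Qed.

Section Schedules.
Variables (N : nat) (kind : nat -> day_kind) (dbar : nat -> R) (abO gam c : R).

Definition forced_dose k : R := match kind k with FixedDay => dbar k | _ => 0 end.

Definition free_dose (d : nat -> R) k : R := match kind k with FreeDay => d k | _ => 0 end.

Lemma dose_split (f : R -> R) (d : nat -> R) k : f 0 = 0 ->
  (kind k = BreakDay -> d k = 0) -> (kind k = FixedDay -> d k = dbar k) ->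
  f (d k) = f (forced_dose k) + f (free_dose d k).
Proof.
  intros Hf0 HB HFx. unfold forced_dose, free_dose.
  destruct (kind k); [rewrite HB | rewrite HFx | ]; auto; rewrite Hf0; ring.
Qed.

Lemma sumN_BED_O_split (d : nat -> R) :
  (forall k, (k < N)%nat -> kind k = BreakDay -> d k = 0) ->
  (forall k, (k < N)%nat -> kind k = FixedDay -> d k = dbar k) ->
  sumN (fun k => BED_O abO gam (d k)) N =
  fixed_BED_sum N kind dbar abO gam + sumN (fun k => BED_O abO gam (free_dose d k)) N.
Proof.
  intros HB HFx. unfold fixed_BED_sum. rewrite <- sumN_plus. apply sumN_ext. intros k Hk.
  rewrite (dose_split (BED_O abO gam) d k (BED_O_0 abO gam) (HB k Hk) (HFx k Hk)).
  unfold forced_dose. destruct (kind k); rewrite ?BED_O_0; reflexivity.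
Qed.

Lemma forced_dose_feasible : 0 < abO -> 0 < gam ->
  (forall k, (k < N)%nat -> kind k = FixedDay -> 0 <= dbar k) ->
  fixed_BED_sum N kind dbar abO gam <= c -> feasible N kind dbar abO gam c forced_dose.
Proof.
  intros Ha Hg Hdbar Hfixed.
  assert (HB : forall k, (k < N)%nat -> kind k = BreakDay -> forced_dose k = 0)
    by (intros k _ E; unfold forced_dose; rewrite E; reflexivity).
  assert (HFx : forall k, (k < N)%nat -> kind k = FixedDay -> forced_dose k = dbar k)
    by (intros k _ E; unfold forced_dose; rewrite E; reflexivity).
  split; [|split; [exact HB | split; [exact HFx|]]].
  - intros k Hk. unfold forced_dose. destruct (kind k) eqn:E; [lra | apply Hdbar; auto | lra].
  - rewrite (sumN_BED_O_split _ HB HFx), sumN_zero; [lra|].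
    intros k _. unfold free_dose, forced_dose. destruct (kind k); apply BED_O_0.
Qed.

Definition single_dose (l : nat) (z : R) k : R := forced_dose k + if Nat.eqb k l then z else 0.

Variables (l : nat) (z : R).
Hypothesis l_free : kind l = FreeDay.

Lemma free_single_dose k : free_dose (single_dose l z) k = if Nat.eqb k l then z else 0.
Proof.
  unfold free_dose, single_dose, forced_dose.
  destruct (kind k) eqn:Hk, (Nat.eqb_spec k l); subst; congruence || ring.
Qed.

Lemma single_dose_forced k : kind k <> FreeDay -> single_dose l z k = forced_dose k.
Proof.
  intros Hk. unfold single_dose. destruct (Nat.eqb_spec k l); subst; [congruence | ring].
Qed.

Lemma single_dose_break k : kind k = BreakDay -> single_dose l z k = 0.
Proof.
  intros E. rewrite single_dose_forced by congruence. unfold forced_dose. rewrite E. reflexivity.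
Qed.

Lemma single_dose_fixed k : kind k = FixedDay -> single_dose l z k = dbar k.
Proof.
  intros E. rewrite single_dose_forced by congruence. unfold forced_dose. rewrite E. reflexivity.
Qed.

Lemma single_dose_feasible : (l < N)%nat -> 0 < abO -> 0 < gam -> 0 <= z ->
  (forall k, (k < N)%nat -> kind k = FixedDay -> 0 <= dbar k) ->
  fixed_BED_sum N kind dbar abO gam + BED_O abO gam z <= c ->
  feasible N kind dbar abO gam c (single_dose l z).
Proof.
  intros Hl Ha Hg Hz Hdbar Hsum.
  assert (HB : forall k, (k < N)%nat -> kind k = BreakDay -> single_dose l z k = 0)
    by (intros; apply single_dose_break; assumption).
  assert (HFx : forall k, (k < N)%nat -> kind k = FixedDay -> single_dose l z k = dbar k)
    by (intros; apply single_dose_fixed; assumption).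
  split; [|split; [exact HB | split; [exact HFx|]]].
  - intros k Hk. unfold single_dose, forced_dose.
    destruct (kind k) eqn:E, (Nat.eqb k l); try lra;
      pose proof (Hdbar k Hk E); lra.
  - rewrite (sumN_BED_O_split _ HB HFx).
    rewrite (sumN_ext _ (fun k => if Nat.eqb k l then BED_O abO gam z else 0)).
    + rewrite sumN_indicator. replace (Nat.ltb l N) with true by (symmetry; apply Nat.ltb_lt; lia).
      exact Hsum.
    + intros k _. rewrite free_single_dose. destruct (Nat.eqb k l); [reflexivity | apply BED_O_0].
Qed.

Lemma sumN_BED_T_sub_single_dose abT (d : nat -> R) n :
  (forall k, (k < N)%nat -> kind k = BreakDay -> d k = 0) ->
  (forall k, (k < N)%nat -> kind k = FixedDay -> d k = dbar k) -> (n <= N)%nat ->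
  sumN (fun k => BED_T abT (d k) - BED_T abT (single_dose l z k)) n =
  sumN (fun k => BED_T abT (free_dose d k)) n - if Nat.ltb l n then BED_T abT z else 0.
Proof.
  intros HB HFx Hn. rewrite <- sumN_indicator, <- sumN_minus. apply sumN_ext. intros k Hk.
  rewrite (dose_split _ d k (BED_T_0 abT)) by (apply HB || apply HFx; lia).
  rewrite (dose_split _ (single_dose l z) k (BED_T_0 abT) (single_dose_break k)
             (single_dose_fixed k)), free_single_dose.
  destruct (Nat.eqb k l); rewrite ?BED_T_0; ring.
Qed.

(* Compare with an arbitrary feasible [d] in two stages: up to day [l], [d] has
   delivered at least as much tumour BED as the single dose at every day, and after [l]
   both schedules coincide. *)
Lemma single_dose_optimal F abT Y0 d :
  mono_nonexpansive F -> 0 < abO -> 0 < gam -> 0 < abT -> gam * abT <= abO ->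
  (l < N)%nat -> (forall k, (k < N)%nat -> kind k = FreeDay -> (k <= l)%nat) -> 0 <= z ->
  fixed_BED_sum N kind dbar abO gam + BED_O abO gam z = c ->
  feasible N kind dbar abO gam c d ->
  Yplus F abT Y0 (single_dose l z) (N - 1) <= Yplus F abT Y0 d (N - 1).
Proof.
  intros HF Ha Hg Ht Hat Hl Hlast Hz Hc [Hd0 [HB [HFx Hsum]]].
  set (lead := fun n => sumN (fun k => BED_T abT (free_dose d k)) n).
  assert (Hlead0 : forall k, (k < N)%nat -> 0 <= BED_T abT (free_dose d k)).
  { intros k Hk. rewrite <- (BED_T_0 abT). apply BED_T_le; [lra|].
    unfold free_dose. destruct (kind k); [lra | lra | split; [lra | auto]]. }
  assert (Htotal : lead N <= BED_T abT z).
  { apply (sumN_BED_T_le_of_BED_O_le abO gam); auto.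
    - intros k Hk. unfold free_dose. destruct (kind k); [lra | lra | auto].
    - rewrite (sumN_BED_O_split d HB HFx) in Hsum. lra. }
  apply (Yplus_le_tail F abT Y0 HF _ _ l); [lia | |].
  - assert (Hgap : forall m, (m < N)%nat ->
      sumN (fun k => BED_T abT (d k) - BED_T abT (single_dose l z k)) (S m) =
      lead (S m) - if Nat.ltb l (S m) then BED_T abT z else 0)
      by (intros; apply sumN_BED_T_sub_single_dose; auto).
    pose proof (Yplus_le_add_BED_T_gap F abT Y0 HF (single_dose l z) d l) as Hcmp.
    rewrite Hgap, (proj2 (Nat.ltb_lt l (S l))) in Hcmp by lia. cbv iota in Hcmp.
    assert (lead (S l) <= lead N) by (apply sumN_le_n; auto).
    enough (forall m, (m < l)%nat ->
      0 <= sumN (fun k => BED_T abT (d k) - BED_T abT (single_dose l z k)) (S m))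
      by (specialize (Hcmp ltac:(assumption)); lra).
    intros m Hm. rewrite Hgap, (proj2 (Nat.ltb_ge l (S m))) by lia. cbv iota.
    enough (0 <= lead (S m)) by lra.
    apply sumN_nonneg. intros k Hk. apply Hlead0. lia.
  - intros k Hk. assert (Hnf : kind k <> FreeDay) by (intros E; specialize (Hlast k ltac:(lia) E); lia).
    rewrite single_dose_forced by assumption. unfold forced_dose.
    destruct (kind k) eqn:E; [rewrite HB | rewrite HFx | congruence]; auto; lia.
Qed.

End Schedules.

Lemma single_last_dose_optimal F abO gam abT c Y0 N kind dbar l :
  mono_nonexpansive F -> 0 < abO -> 0 < gam -> 0 < abT -> gam * abT <= abO ->
  (forall k, (k < N)%nat -> kind k = FixedDay -> 0 <= dbar k) ->
  fixed_BED_sum N kind dbar abO gam <= c ->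
  (l < N)%nat -> kind l = FreeDay -> (forall k, (k < N)%nat -> kind k = FreeDay -> (k <= l)%nat) ->
  exists d, optimal N kind dbar abO gam c F abT Y0 d /\
    (forall k, (k < N)%nat -> kind k = FreeDay -> k <> l -> d k = 0) /\
    (fixed_BED_sum N kind dbar abO gam < c -> 0 < d l).
Proof.
  intros HF Ha Hg Ht Hat Hdbar Hfixed Hl Hlfree Hlast.
  set (z := BED_O_inv abO gam (c - fixed_BED_sum N kind dbar abO gam)).
  destruct (BED_O_inv_spec abO gam (c - fixed_BED_sum N kind dbar abO gam) Ha Hg ltac:(lra))
    as [Hz0 [Hz Hzpos]]; fold z in Hz0, Hz, Hzpos.
  exists (single_dose kind dbar l z). split; [split|split].
  - apply single_dose_feasible; auto. lra.
  - intros d Hd. apply (single_dose_optimal N kind dbar abO gam c); auto. lra.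
  - intros k _ Hk Hkl. unfold single_dose, forced_dose. rewrite Hk.
    apply Nat.eqb_neq in Hkl. rewrite Hkl. ring.
  - intros Hlt. unfold single_dose, forced_dose. rewrite Hlfree, Nat.eqb_refl.
    specialize (Hzpos ltac:(lra)). lra.
Qed.

Definition in_box (lo hi : nat -> R) (h : (nat -> R) -> R) (c : R) (d : nat -> R) : Prop :=
  (forall k, lo k <= d k <= hi k) /\ h d <= c.

Module Compactness.
Import structures all_boot all_order all_algebra all_classical all_reals all_analysis.
Import Rstruct Rstruct_topology.
Import Order.TTheory GRing.Theory Num.Theory.
Import numFieldNormedType.Exports.
Local Open Scope classical_set_scope.
Local Open Scope ring_scope.

Definition pointwise_continuous (g : {ptws nat -> R} -> R) : Prop := continuous g.

Lemma pointwise_continuous_proj k : pointwise_continuous (fun d => d k).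
Proof. exact: (@proj_continuous nat (fun _ => R) k). Qed.

Lemma pointwise_continuous_cst a : pointwise_continuous (fun _ => a).
Proof. exact: cst_continuous. Qed.

Lemma pointwise_continuous_plus f g : pointwise_continuous f -> pointwise_continuous g ->
  pointwise_continuous (fun d => Rplus (f d) (g d)).
Proof. by move=> cf cg d; apply: (@cvgD R R^o); [exact: cf | exact: cg]. Qed.

Lemma pointwise_continuous_mult f g : pointwise_continuous f -> pointwise_continuous g ->
  pointwise_continuous (fun d => Rmult (f d) (g d)).
Proof. by move=> cf cg d; apply: cvgM; [exact: cf | exact: cg]. Qed.

Lemma pointwise_continuous_opp f : pointwise_continuous f ->
  pointwise_continuous (fun d => Ropp (f d)).
Proof. by move=> cf d; apply: (@cvgN R R^o); exact: cf. Qed.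

Lemma pointwise_continuous_comp (u : R -> R) f : (forall x, continuity_pt u x) ->
  pointwise_continuous f -> pointwise_continuous (fun d => u (f d)).
Proof. by move=> cu cf d; apply: continuous_comp; [exact: cf | exact/continuity_pt_cvg]. Qed.

Lemma pointwise_continuous_sumN (g : {ptws nat -> R} -> nat -> R) n :
  (forall k, pointwise_continuous (fun d => g d k)) ->
  pointwise_continuous (fun d => sumN (g d) n).
Proof.
move=> cg; elim: n => [|n IH] /=; first exact: pointwise_continuous_cst.
exact: pointwise_continuous_plus.
Qed.

Lemma pointwise_continuous_Yplus (F : R -> R) abT Y0 n :
  (forall x, continuity_pt F x) -> (forall x, continuity_pt (BED_T abT) x) ->
  pointwise_continuous (fun d => Yplus F abT Y0 d n).
Proof.
move=> cF cB; have cBk k : pointwise_continuous (fun d => BED_T abT (d k)).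
  exact: (pointwise_continuous_comp _ _ cB (pointwise_continuous_proj k)).
elim: n => [|n IH] /=; apply: pointwise_continuous_plus;
  [exact: pointwise_continuous_cst | exact: pointwise_continuous_opp |
   exact: (pointwise_continuous_comp _ _ cF) | exact: pointwise_continuous_opp].
Qed.

Lemma compact_lexicographic_optimum {R : realType} {T : topologicalType}
    (K : set T) (G W : T -> R) :
  compact K -> K !=set0 -> continuous G -> continuous W ->
  exists2 d, K d & (forall d', K d' -> G d <= G d') /\
                   (forall d', K d' -> G d' <= G d -> W d' <= W d).
Proof.
move=> cK K0 cG cW.
have [d1 /set_mem d1K d1min] := compact_EVT_min K0 cK (continuous_subspaceT cG).
pose K2 := K `&` (G @^-1` [set x | x <= G d1]).
have cK2 : compact K2.
  apply: compact_closedI => //; apply: preimage_closed; last exact: closed_le.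
  by move=> x _; exact: cG.
have [|d2 /set_mem [d2K d2G] d2max] := compact_EVT_max _ cK2 (continuous_subspaceT cW).
  by exists d1; split => /=.
exists d2 => //; split=> [d' d'K | d' d'K d'G].
  by apply: le_trans d2G _; exact/d1min/mem_set.
by apply/d2max/mem_set; split=> //; exact: le_trans d'G d2G.
Qed.

Lemma compact_in_box (lo hi : nat -> R) {h : {ptws nat -> R} -> R} c :
  pointwise_continuous h -> compact (in_box lo hi h c : set {ptws nat -> R}).
Proof.
move=> ch.
have -> : in_box lo hi h c =
    [set d : {ptws nat -> R} | forall k, `[lo k, hi k]%classic (d k)] `&` (h @^-1` [set x | x <= c]).
  apply/seteqP; split=> d /=.
    move=> [Hd /RleP Hh]; split=> // k; rewrite /= in_itv /=.
    by have [/RleP -> /RleP ->] := Hd k.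
  move=> [Hd Hh]; split; last exact/RleP.
  by move=> k; have := Hd k; rewrite /= in_itv /= => /andP[/RleP ? /RleP ?].
apply: compact_closedI.
  by apply: (@tychonoff nat (fun _ => R) (fun k => `[lo k, hi k]%classic)) => k; exact: segment_compact.
apply: preimage_closed; last exact: closed_le.
by move=> x _; exact: ch.
Qed.

Lemma in_box_lexicographic_optimum (lo hi : nat -> R) (h G W : {ptws nat -> R} -> R) c :
  pointwise_continuous h -> pointwise_continuous G -> pointwise_continuous W ->
  (exists d0, in_box lo hi h c d0) ->
  exists d, in_box lo hi h c d /\
    (forall d', in_box lo hi h c d' -> Rle (G d) (G d')) /\
    (forall d', in_box lo hi h c d' -> Rle (G d') (G d) -> Rle (W d') (W d)).
Proof.
move=> ch cG cW [d0 Hd0].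
have [d Hd [Gmin Wmax]] := compact_lexicographic_optimum _ G W (compact_in_box lo hi c ch) (ex_intro _ d0 Hd0) cG cW.
exists d; split=> //; split=> [d' /Gmin /RleP // | d' /Wmax H /RleP /H /RleP //].
Qed.

End Compactness.

Lemma continuity_pt_BED_O abO gam x : 0 < abO -> continuity_pt (BED_O abO gam) x.
Proof. intros. unfold BED_O. reg. Qed.

Lemma continuity_pt_BED_T abT x : 0 < abT -> continuity_pt (BED_T abT) x.
Proof. intros. unfold BED_T. reg. Qed.

Lemma continuity_pt_mono_nonexpansive F x : mono_nonexpansive F -> continuity_pt F x.
Proof.
  intros HF eps Heps. exists eps. split; [exact Heps|].
  intros y [_ Hy]. simpl in *. unfold R_dist in *.
  destruct (Rle_dec x y) as [Hxy|Hxy].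
  - destruct (HF x y Hxy). rewrite Rabs_right in * by lra. lra.
  - destruct (HF y x ltac:(lra)). rewrite Rabs_left1 in * by lra. lra.
Qed.

Section NondecreasingOptimum.
Variables (N : nat) (kind : nat -> day_kind) (dbar : nat -> R) (abO gam c : R).
Hypotheses (abO_pos : 0 < abO) (gam_pos : 0 < gam).
Hypothesis dbar_nonneg : forall k, (k < N)%nat -> kind k = FixedDay -> 0 <= dbar k.
Hypothesis fixed_le_c : fixed_BED_sum N kind dbar abO gam <= c.

Definition dose_lower k : R := if Nat.ltb k N then forced_dose kind dbar k else 0.

Definition dose_upper k : R :=
  if Nat.ltb k N then match kind k with FreeDay => c / gam | _ => forced_dose kind dbar k end
  else 0.

Definition BED_O_total (d : nat -> R) : R := sumN (fun k => BED_O abO gam (d k)) N.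

Definition truncate (d : nat -> R) k : R := if Nat.ltb k N then d k else 0.

Lemma in_box_feasible d : in_box dose_lower dose_upper BED_O_total c d ->
  feasible N kind dbar abO gam c d.
Proof.
  intros [Hbox Hsum]. split; [|split; [|split]]; [intros k Hk .. | exact Hsum];
    specialize (Hbox k); unfold dose_lower, dose_upper, forced_dose in Hbox;
    rewrite (proj2 (Nat.ltb_lt k N) Hk) in Hbox.
  - destruct (kind k) eqn:E; try lra. pose proof (dbar_nonneg k Hk E). lra.
  - intros E. rewrite E in Hbox. lra.
  - intros E. rewrite E in Hbox. lra.
Qed.

(* Coordinates beyond [N] are irrelevant but must be pinned down for compactness. *)
Lemma feasible_truncate_in_box d : feasible N kind dbar abO gam c d ->
  in_box dose_lower dose_upper BED_O_total c (truncate d).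
Proof.
  intros [Hd0 [HB [HFx Hsum]]].
  assert (Htotal : BED_O_total (truncate d) = BED_O_total d).
  { apply sumN_ext. intros k Hk. unfold truncate. rewrite (proj2 (Nat.ltb_lt k N) Hk). reflexivity. }
  split; [|rewrite Htotal; exact Hsum].
  intros k. unfold dose_lower, dose_upper, truncate, forced_dose.
  destruct (Nat.ltb_spec k N) as [Hk|]; [|lra].
  destruct (kind k) eqn:E; [rewrite (HB k Hk E) | rewrite (HFx k Hk E) |]; try lra.
  split; [apply Hd0; exact Hk|].
  assert (BED_O abO gam (d k) <= c).
  { apply Rle_trans with (BED_O_total d); [|exact Hsum].
    apply (sumN_le_term (fun k => BED_O abO gam (d k))); [|exact Hk].
    intros; apply BED_O_nonneg; auto. }
  pose proof (BED_O_ge_linear abO gam (d k) abO_pos gam_pos (Hd0 k Hk)).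
  apply Rmult_le_reg_l with gam; [exact gam_pos|]. field_simplify; lra.
Qed.

Lemma swap_feasible d i j : i <> j -> (i < N)%nat -> (j < N)%nat ->
  kind i = FreeDay -> kind j = FreeDay ->
  feasible N kind dbar abO gam c d -> feasible N kind dbar abO gam c (swap d i j).
Proof.
  intros Hij Hi Hj Ki Kj [Hd0 [HB [HFx Hsum]]].
  assert (Hfixed : forall k, kind k <> FreeDay -> swap d i j k = d k).
  { intros k Hk. unfold swap.
    destruct (Nat.eqb_spec k i), (Nat.eqb_spec k j); subst; congruence. }
  split; [|split; [|split]].
  - intros k Hk. unfold swap. destruct (Nat.eqb k i), (Nat.eqb k j); auto.
  - intros k Hk E. rewrite Hfixed by congruence. auto.
  - intros k Hk E. rewrite Hfixed by congruence. auto.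
  - pose proof (sumN_swap_sub (fun _ => BED_O abO gam) d i j N Hij Hi Hj) as Hswap.
    rewrite sumN_minus in Hswap. lra.
Qed.

Definition day_weighted_dose (d : nat -> R) : R := sumN (fun k => INR k * d k) N.

Variables (F : R -> R) (abT Y0 : R).
Hypotheses (F_mono_nonexpansive : mono_nonexpansive F) (abT_pos : 0 < abT) (N_pos : (1 <= N)%nat).

Lemma exists_latest_optimal : exists d, optimal N kind dbar abO gam c F abT Y0 d /\
  forall d', feasible N kind dbar abO gam c d' ->
    Yplus F abT Y0 d' (N - 1) <= Yplus F abT Y0 d (N - 1) ->
    day_weighted_dose d' <= day_weighted_dose d.
Proof.
  assert (Htrunc_Y : forall d, Yplus F abT Y0 (truncate d) (N - 1) = Yplus F abT Y0 d (N - 1)).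
  { intros d. apply Yplus_ext. intros k Hk. unfold truncate.
    destruct (Nat.ltb_spec k N); [reflexivity | lia]. }
  assert (Htrunc_W : forall d, day_weighted_dose (truncate d) = day_weighted_dose d).
  { intros d. apply sumN_ext. intros k Hk. unfold truncate.
    rewrite (proj2 (Nat.ltb_lt k N) Hk). reflexivity. }
  destruct (Compactness.in_box_lexicographic_optimum dose_lower dose_upper BED_O_total
              (fun d => Yplus F abT Y0 d (N - 1)) day_weighted_dose c)
    as [d [Hd [Hmin Hmax]]].
  - apply Compactness.pointwise_continuous_sumN. intros k.
    apply Compactness.pointwise_continuous_comp; [intros; apply continuity_pt_BED_O; lra|].
    apply Compactness.pointwise_continuous_proj.
  - apply Compactness.pointwise_continuous_Yplus; intros.
    + apply continuity_pt_mono_nonexpansive; assumption.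
    + apply continuity_pt_BED_T; assumption.
  - apply Compactness.pointwise_continuous_sumN. intros k.
    apply Compactness.pointwise_continuous_mult;
      [apply Compactness.pointwise_continuous_cst | apply Compactness.pointwise_continuous_proj].
  - exists (truncate (forced_dose kind dbar)). apply feasible_truncate_in_box.
    apply forced_dose_feasible; assumption.
  - exists d. split; [split|].
    + apply in_box_feasible. exact Hd.
    + intros d' Hd'. rewrite <- (Htrunc_Y d'). apply Hmin, feasible_truncate_in_box, Hd'.
    + intros d' Hd' HY. rewrite <- (Htrunc_W d'). rewrite <- (Htrunc_Y d') in HY.
      apply Hmax; [apply feasible_truncate_in_box, Hd' | exact HY].
Qed.

Lemma exists_nondecreasing_optimal : exists d, optimal N kind dbar abO gam c F abT Y0 d /\
  forall i j, (i < N)%nat -> (j < N)%nat -> kind i = FreeDay -> kind j = FreeDay ->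
    (i <= j)%nat -> d i <= d j.
Proof.
  destruct exists_latest_optimal as [d [[Hd Hopt] Hlatest]].
  exists d. split; [split; assumption|].
  intros i j Hi Hj Ki Kj Hij.
  destruct (Rle_or_lt (d i) (d j)) as [|Hinv]; [assumption|exfalso].
  destruct (Nat.eq_dec i j) as [->|Hne]; [lra|].
  assert (Hswap : feasible N kind dbar abO gam c (swap d i j)) by (apply swap_feasible; auto).
  assert (HY : Yplus F abT Y0 (swap d i j) (N - 1) <= Yplus F abT Y0 d (N - 1)).
  { apply Yplus_swap_le; [assumption | lia | lia |].
    apply BED_T_le; [assumption|]. destruct Hd as [Hd0 _]. split; [apply Hd0 | lra]; assumption. }
  pose proof (Hlatest _ Hswap HY) as HW.
  pose proof (sumN_swap_sub (fun k x => INR k * x) d i j N Hne Hi Hj) as Hgain.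
  rewrite sumN_minus in Hgain. fold (day_weighted_dose (swap d i j)) (day_weighted_dose d) in Hgain.
  assert (INR i < INR j) by (apply lt_INR; lia).
  nra.
Qed.
End NondecreasingOptimum.

Theorem corollary1
  (alphaT betaT abO gam c X0 : R) (phi F : R -> R)
  (N : nat) (kind : nat -> day_kind) (dbar : nat -> R) (l : nat) :
  0 < alphaT -> 0 < betaT -> 0 < abO -> 0 < gam < 1 -> 0 < c -> 0 < X0 ->
  (forall x, 0 < x -> continuous phi x) ->
  (forall x y, 0 < x -> x <= y -> phi y <= phi x) ->
  (forall x, 0 < x -> 0 < phi x) ->
  one_day_growth_map alphaT phi F ->
  (1 <= N)%nat ->
  (forall k, (k < N)%nat -> kind k = FixedDay -> 0 <= dbar k) ->
  fixed_BED_sum N kind dbar abO gam <= c ->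
  (* l is the last free day (so there is at least one free day) *)
  (l < N)%nat -> kind l = FreeDay ->
  (forall k, (k < N)%nat -> kind k = FreeDay -> (k <= l)%nat) ->
  (abO >= gam * (alphaT / betaT) ->
     exists d, optimal N kind dbar abO gam c F (alphaT / betaT) (ln X0 / alphaT) d /\
       (forall k, (k < N)%nat -> kind k = FreeDay -> k <> l -> d k = 0) /\
       (fixed_BED_sum N kind dbar abO gam < c ->
          0 < d l)) /\
  (abO < gam * (alphaT / betaT) ->
     exists d, optimal N kind dbar abO gam c F (alphaT / betaT) (ln X0 / alphaT) d /\
       (forall i j, (i < N)%nat -> (j < N)%nat -> kind i = FreeDay -> kind j = FreeDay ->
          (i <= j)%nat -> d i <= d j)).
Proof.
  intros Ha Hb HaO Hg Hc _ _ Hphi _ Hgrowth HN Hdbar Hfixed Hl Hlfree Hlast.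
  assert (HF := growth_map_mono_nonexpansive alphaT phi F Ha Hphi Hgrowth).
  assert (HabT : 0 < alphaT / betaT) by (apply Rdiv_lt_0_compat; lra).
  split; intros Hcase.
  - apply single_last_dose_optimal; auto; lra.
  - apply exists_nondecreasing_optimal; auto; lra.
Qed.
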